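(* Let $-1<\lambda\le0$. Then the function $t\mapsto-(\phi_\lambda^{[-1]})'(t)$ is non-increasing on $(0,\infty)$. Furthermore, if $-1<\lambda\le-1/2$ this function is convex on $(0,\infty)$, whereas if $-1/2<\lambda\le0$ it fails to be convex on $(0,\infty)$.
   Context: For $\lambda\neq-1,0$, $\phi_\lambda(x)=\frac{1}{\lambda(\lambda+1)}(x^{\lambda+1}-x+\lambda(1-x))$, and $\phi_0(x)=1-x+x\log x$, for $x\ge0$ (value at $0$ as a limit). For $-1<\lambda\le0$, $\phi_\lambda(0)=1/(\lambda+1)$ and $\phi_\lambda$ is convex and strictly decreasing on $[0,1]$ with $\phi_\lambda(1)=0$. The pseudoinverse is $\phi_\lambda^{[-1]}(t)=\phi_\lambda^{-1}(t)$ (inverse of $\phi_\lambda|_{[0,1]}$) for $0\le t<\phi_\lambda(0)$ and $\phi_\lambda^{[-1]}(t)=0$ for $t\ge\phi_\lambda(0)$; for these $\lambda$ it is differentiable on $(0,\infty)$. *)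

From HB Require Import structures.
From mathcomp Require Import all_boot all_order all_algebra.
From mathcomp Require Import all_classical all_reals all_analysis.
Set Implicit Arguments. Unset Strict Implicit. Unset Printing Implicit Defensive.
Import Order.TTheory GRing.Theory Num.Theory.
Local Open Scope ring_scope.
Local Open Scope classical_set_scope.

(* phi_lambda(x), for x >= 0.  powR satisfies 0 `^ a = 0 for a <> 0, and
   ln 0 = 0 in MathComp-Analysis, so the values at x = 0 agree with the
   limits used in the paper. *)
Definition phi {R : realType} (lam x : R) : R :=
  if lam == 0 then 1 - x + x * ln x
  else (lam * (lam + 1))^-1 * (x `^ (lam + 1) - x + lam * (1 - x)).

(* Pseudoinverse: inverse of phi_lambda restricted to [0,1] on [0, phi(0)),
   and 0 on [phi(0), +oo).  (Values for t < 0 are irrelevant.) *)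
Definition phi_pinv {R : realType} (lam t : R) : R :=
  if t < phi lam 0 then xget 0 [set x : R | 0 <= x <= 1 /\ phi lam x = t]
  else 0.

Definition nonincreasing_pos {R : realType} (f : R -> R) : Prop :=
  forall s t : R, 0 < s -> s <= t -> f t <= f s.

Definition convex_pos {R : realType} (f : R -> R) : Prop :=
  forall (x y a : R), 0 < x -> 0 < y -> 0 <= a <= 1 ->
    f (a * x + (1 - a) * y) <= a * f x + (1 - a) * f y.

(* For 0 < t < phi(0) the pseudoinverse g of phi = phi_lam is the inverse of
   phi on (0, 1), so -g'(t) = -1 / phi'(g t); since phi' < 0 is nondecreasing
   and g is decreasing, -g' is nonnegative and nonincreasing there.  At
   t = phi(0) the tangent inequality x (-phi'(x)) <= phi(0) - phi(x), together
   with phi'(x) -> -oo as x -> 0+, shows that g'(phi(0)) = 0, and g = 0 beyond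
   phi(0).  The derivative of -g' at t = phi(x) is phi''(x) / phi'(x)^3; for
   lam < 0 it equals lam^3 x^(-(2 lam + 1)) / (1 - x^(-lam))^3, which is
   nonincreasing in x, hence nondecreasing in t, when lam <= -1/2: then -g' is
   convex on (0, phi(0)], and convexity survives the flat extension by 0.
   When -1/2 < lam <= 0, (phi(0) - phi(x)) (-phi'(x)) -> 0 as x -> 0+, so
   -g'(t) / (phi(0) - t) is unbounded as t -> phi(0)-, which no convex function
   vanishing at phi(0) allows. *)

From HB Require Import structures.
From mathcomp Require Import all_boot all_order all_algebra.
From mathcomp Require Import all_classical all_reals all_analysis.
From mathcomp Require Import ring lra.
Import Order.TTheory GRing.Theory Num.Theory.
Import numFieldNormedType.Exports.
Local Open Scope classical_set_scope.
Local Open Scope ring_scope.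

Lemma near_right0_small (R : realType) (Q : R -> Prop) :
  (\forall x \near 0^'+, Q x) ->
  exists2 eta : R, 0 < eta < 1 & forall x, 0 < x <= eta -> Q x.
Proof.
rewrite near_withinE => /nbhs_ballP[e /= e0 He].
exists (Num.min (e / 2) 2^-1).
  rewrite lt_min divr_gt0 //= invr_gt0 ltr0n /= gt_min invf_lt1 ?ltr0n ?ltr1n ?orbT //.
move=> x /andP[x0]; rewrite le_min => /andP[xe _]; apply: He => //.
by rewrite /ball /= sub0r normrN gtr0_norm //; lra.
Qed.

Lemma chord_le_of_derive_homo (R : realType) (g dg : R -> R) (a b : R) : a < b ->
  (forall x, a < x < b -> is_derive x 1 g (dg x)) ->
  (forall x y, a < x -> x <= y -> y < b -> dg x <= dg y) ->
  g x @[x --> a^'+] --> g a -> g x @[x --> b^'-] --> g b ->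
  forall z, a <= z <= b -> (b - a) * g z <= (b - z) * g a + (z - a) * g b.
Proof.
move=> ab g_derive dg_le ga gb z /andP[az zb].
have [<-|azn] := eqVneq a z; first lra.
have [->|zbn] := eqVneq z b; first lra.
have az' : a < z by rewrite lt_neqAle azn.
have zb' : z < b by rewrite lt_neqAle zbn.
have g_cont_z : g x @[x --> z] --> g z.
  apply: differentiable_continuous; apply/derivable1_diffP.
  by case: (g_derive z (ltac:(by rewrite az' zb'))).
have mvt u v : a <= u -> u < v -> v <= b ->
    g x @[x --> u^'+] --> g u -> g x @[x --> v^'-] --> g v ->
    exists2 c, c \in `]u, v[ & g v - g u = dg c * (v - u).
  move=> au uv vb gu gv; have sub x : u < x < v -> a < x < b.
    by case/andP=> ux xv; rewrite (le_lt_trans au ux) (lt_le_trans xv vb).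
  apply: MVT => //; first by move=> x; rewrite in_itv /= => /sub/g_derive.
  apply: derivable_oo_LRcontinuous_within; split => //.
  by move=> x; rewrite in_itv /= => /sub/g_derive[].
have [c1] := mvt a z (lexx a) az' (ltW zb') ga (cvg_at_left_filter g_cont_z).
have [c2] := mvt z b (ltW az') zb' (lexx b) (cvg_at_right_filter g_cont_z) gb.
rewrite !in_itv /= => /andP[zc2 c2b] e2 /andP[ac1 c1z] e1.
have : dg c1 <= dg c2 by apply: dg_le => //; apply: ltW; exact: lt_trans zc2.
have : 0 <= (b - z) * (z - a) by apply: mulr_ge0; lra.
nra.
Qed.

Lemma convex_pos_of_chord (R : realType) (g : R -> R) :
  (forall a b z, 0 < a -> a <= z <= b ->
    (b - a) * g z <= (b - z) * g a + (z - a) * g b) ->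
  convex_pos g.
Proof.
move=> chord.
suff le_case x y a : 0 < x -> x <= y -> 0 <= a <= 1 ->
    g (a * x + (1 - a) * y) <= a * g x + (1 - a) * g y.
  move=> x y a x0 y0 a01; have [xy|yx] := leP x y; first exact: le_case.
  have := le_case y x (1 - a) y0 (ltW yx) (ltac:(lra)).
  by rewrite subKr addrC [X in _ <= X]addrC.
move=> x0 xy /andP[a0 a1].
have [<-|xyn] := eqVneq x y; first by rewrite -!mulrDl addrC subrK !mul1r.
set z := a * x + (1 - a) * y.
have xy' : x < y by rewrite lt_neqAle xyn.
have := chord x y z x0 (ltac:(rewrite /z; apply/andP; split; nra)).
have -> : y - z = a * (y - x) by rewrite /z; ring.
have -> : z - x = (1 - a) * (y - x) by rewrite /z; ring.
have -> : a * (y - x) * g x + (1 - a) * (y - x) * g y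
    = (y - x) * (a * g x + (1 - a) * g y) by ring.
by rewrite ler_pM2l // subr_gt0.
Qed.

Section real_facts.
Context {R : realType}.
Implicit Types (a x r : R).

Lemma scaler_mulE a x : a *: x = a * x.
Proof. by []. Qed.

Lemma powR_gt1 x a : 0 < x < 1 -> a < 0 -> 1 < x `^ a.
Proof.
move=> /andP[x0 x1] a0; rewrite /powR gt_eqF //= expR_gt1.
by rewrite nmulr_rgt0 // ln_lt0 // x0 x1.
Qed.

Lemma powR_lt1 x a : 0 < x < 1 -> 0 < a -> x `^ a < 1.
Proof.
move=> /andP[x0 x1] a0; rewrite /powR gt_eqF //= expR_lt1.
by rewrite pmulr_rlt0 // ln_lt0 // x0 x1.
Qed.

Lemma powR_cvgy0 {a} : a < 0 -> x `^ a @[x --> 0^'+] --> +oo.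
Proof.
move=> a0; have Na0 : 0 < - a by rewrite oppr_gt0.
apply/cvgryPge => A; have A1 : 0 < `|A| + 1 by have := normr_ge0 A; lra.
near=> x; have x0 : 0 < x by near: x; exact: nbhs_right_gt.
have small : x `^ (- a) < (`|A| + 1)^-1.
  by near: x; apply: (cvgr_lt 0 (powR_cvg0 Na0)); rewrite invr_gt0.
have : `|A| + 1 < (x `^ (- a))^-1.
  by rewrite -[X in X < _]invrK ltf_pV2 ?posrE ?invr_gt0 ?powR_gt0.
by rewrite -powRN opprK; have := ler_norm A; lra.
Unshelve. all: by end_near.
Qed.

Lemma scale_powR_cvg0 r a : 0 < a -> r * x `^ a @[x --> 0^'+] --> 0.
Proof.
move=> a0; rewrite -[X in _ --> X](mulr0 r).
by apply: cvgM; [exact: cvg_cst | exact: powR_cvg0].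
Qed.

Lemma lnN_expn_le n {r} : 0 < r -> - ln (r ^+ n) <= n%:R / r.
Proof.
move=> r0; rewrite lnXn // -mulNrn mulr_natl; apply: ler_wMn2r.
by rewrite -lnV ?posrE // ltW // ln_sublinear // invr_gt0.
Qed.

Lemma x_lnN_le {x} : 0 < x -> x * - ln x <= 2 * x `^ 2^-1.
Proof.
move=> x0; rewrite powR12_sqrt ?(ltW x0) //; set r := Num.sqrt x.
have r0 : 0 < r by rewrite sqrtr_gt0.
have xE : x = r ^+ 2 by rewrite sqr_sqrtr // ltW.
have lnx := lnN_expn_le 2 r0; rewrite -xE in lnx.
have <- : x * (2%:R / r) = 2 * r by rewrite xE; field; rewrite gt_eqF.
by rewrite ler_wpM2l // ltW.
Qed.

Lemma x_ln_cvg0 : x * ln x @[x --> (0 : R)^'+] --> 0.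
Proof.
apply: (@squeeze_cvgr _ _ _ _ (fun x : R => - 2 * x `^ 2^-1) (fun=> 0)).
- near=> x; have x0 : 0 < x by near: x; exact: nbhs_right_gt.
  have x1 : x < 1 by near: x; exact: nbhs_right_lt.
  have := x_lnN_le x0; have : ln x < 0 by rewrite ln_lt0 // x0 x1.
  by move=> lnx0 xlnx; apply/andP; split; nra.
- exact: scale_powR_cvg0.
- exact: cvg_cst.
Unshelve. all: by end_near.
Qed.

Lemma x_ln2_cvg0 : x * ln x ^+ 2 @[x --> (0 : R)^'+] --> 0.
Proof.
apply: (@squeeze_cvgr _ _ _ _ (fun=> 0) (fun x : R => 16 * x `^ 2^-1)).
- near=> x; have x0 : 0 < x by near: x; exact: nbhs_right_gt.
  have x1 : x < 1 by near: x; exact: nbhs_right_lt.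
  rewrite mulr_ge0 ?sqr_ge0 ?(ltW x0) //=.
  rewrite powR12_sqrt ?(ltW x0) //; set r := Num.sqrt (Num.sqrt x).
  have r0 : 0 < r by rewrite !sqrtr_gt0.
  have sqrtE : Num.sqrt x = r ^+ 2 by rewrite sqr_sqrtr // sqrtr_ge0.
  have xE : x = r ^+ 4 by rewrite -[4%N]/(2 * 2)%N exprM -sqrtE sqr_sqrtr // ltW.
  have lnx := lnN_expn_le 4 r0; rewrite -xE in lnx.
  have lnx0 : 0 <= - ln x by rewrite oppr_ge0 ltW // ln_lt0 // x0 x1.
  have lnx2 : (- ln x) ^+ 2 <= (4%:R / r) ^+ 2.
    by apply: lerXn2r; rewrite ?nnegrE // divr_ge0 // ltW.
  rewrite -sqrrN sqrtE; apply: (le_trans (ler_wpM2l (ltW x0) lnx2)).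
  by rewrite [X in X * _]xE le_eqVlt; apply/orP; left; apply/eqP; field; rewrite gt_eqF.
- exact: cvg_cst.
- exact: scale_powR_cvg0.
Unshelve. all: by end_near.
Qed.

End real_facts.

Section pseudoinverse.
Context {R : realType}.
Variables f df : R -> R.
Implicit Types (a b e s t x y M : R).
Hypothesis f1 : f 1 = 0.
Hypothesis f_derive : forall x, 0 < x -> is_derive x 1 f (df x).
Hypothesis df_lt0 : forall x, 0 < x < 1 -> df x < 0.
Hypothesis df_le : forall x y, 0 < x -> x <= y -> y < 1 -> df x <= df y.
Hypothesis f0_tangent : forall x, 0 < x < 1 -> x * - df x <= f 0 - f x.
Hypothesis df_cvgNy : df x @[x --> 0^'+] --> -oo.
Hypothesis f_cvg0 : f x @[x --> 0^'+] --> f 0.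

Definition pinv (t : R) : R :=
  if t < f 0 then xget 0 [set x | 0 <= x <= 1 /\ f x = t] else 0.

Definition dpinvN (t : R) : R := - derive1 pinv t.

Lemma f_cvg {x} : 0 < x -> f y @[y --> x] --> f x.
Proof.
move=> x0; apply: differentiable_continuous; apply/derivable1_diffP.
by case: (f_derive _ x0).
Qed.

Lemma f_within_continuous a b : 0 < a -> {within `[a, b], continuous f}.
Proof.
move=> a0; apply: continuous_in_subspaceT => x.
by rewrite inE /= in_itv /= => /andP[ax _]; apply: f_cvg; exact: lt_le_trans ax.
Qed.

Lemma f_decr_pos {x y} : 0 < x -> x < y -> y <= 1 -> f y < f x.
Proof.
move=> x0 xy y1.
have f_derive_xy z : z \in `]x, y[ -> is_derive z 1 f (df z).
  by rewrite in_itv /= => /andP[xz _]; apply: f_derive; exact: lt_trans xz.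
have [c] := MVT xy f_derive_xy (f_within_continuous x y x0).
rewrite in_itv /= => /andP[xc cy] e.
have : df c < 0 by apply: df_lt0; rewrite (lt_trans x0 xc) (lt_le_trans cy y1).
by move=> dfc; rewrite -subr_lt0 e; nra.
Qed.

Lemma f_lt_f0 {x} : 0 < x < 1 -> f x < f 0.
Proof. by move=> x01; have := f0_tangent _ x01; have := df_lt0 _ x01; case/andP: x01; nra. Qed.

Lemma f_decr {x y} : 0 <= x -> x < y -> y <= 1 -> f y < f x.
Proof.
move=> x0 xy y1; have [x00|xn0] := eqVneq x 0; last first.
  by apply: f_decr_pos => //; rewrite lt_neqAle eq_sym xn0.
rewrite {}x00 in xy *.
apply: (@lt_trans _ _ (f (y / 2))); first by apply: f_decr_pos; lra.
by apply: f_lt_f0; lra.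
Qed.

Lemma f_inj01 {x y} : 0 <= x <= 1 -> 0 <= y <= 1 -> f x = f y -> x = y.
Proof.
move=> /andP[x0 x1] /andP[y0 y1] fxy; have [xy|yx|//] := ltgtP x y.
- by have := f_decr x0 xy y1; rewrite fxy ltxx.
- by have := f_decr y0 yx x1; rewrite fxy ltxx.
Qed.

Lemma f_ge0 {x} : 0 <= x <= 1 -> 0 <= f x.
Proof.
move=> /andP[x0 x1]; have [->|x1n] := eqVneq x 1; first by rewrite f1.
by rewrite -f1 ltW // f_decr // lt_neqAle x1n.
Qed.

Lemma f0_gt0 : 0 < f 0.
Proof. by have := f_decr (lexx 0) ltr01 (lexx 1); rewrite f1. Qed.

Lemma df_near0 M : exists2 eta, 0 < eta < 1 & forall x, 0 < x <= eta -> M <= - df x.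
Proof.
apply: near_right0_small; move/cvgrNyPle: df_cvgNy => /(_ (- M)).
by apply: filterS => x; rewrite lerNr.
Qed.

Lemma f_near0 {e} : 0 < e ->
  exists2 eta, 0 < eta < 1 & forall x, 0 < x <= eta -> f 0 - f x <= e.
Proof.
move=> e0; apply: near_right0_small; move/cvgrPdist_le: f_cvg0 => /(_ e e0).
by apply: filterS => x; apply: le_trans; exact: ler_norm.
Qed.

Lemma pinv_f {x} : 0 <= x <= 1 -> pinv (f x) = x.
Proof.
move=> /[dup] x01 /andP[x0 x1]; rewrite /pinv.
have [->|xn0] := eqVneq x 0; first by rewrite ltxx.
rewrite f_decr // ?lt_neqAle 1?eq_sym ?xn0 //.
by apply: xget_unique => [|y [y01 fy]]; [split | apply: f_inj01].
Qed.

Lemma pinv_spec {t} : 0 < t < f 0 -> 0 < pinv t < 1 /\ f (pinv t) = t.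
Proof.
move=> /andP[t0 tf0].
have [eta /andP[eta0 eta1] f_eta] := f_near0 (ltac:(by rewrite subr_gt0) : 0 < f 0 - t).
have [x] : exists2 x, x \in `[eta, 1] & f x = t.
  apply: IVT; [exact: ltW | exact: f_within_continuous |].
  have := f_eta eta (ltac:(by rewrite eta0 lexx)).
  rewrite f1 ge_min le_max => fe; apply/andP; split; apply/orP; [right | left]; lra.
rewrite in_itv /= => /andP[etax x1] fx.
have x0 : 0 < x by exact: lt_le_trans etax.
have xn1 : x != 1 by apply: contraTneq t0 => x1e; rewrite -fx x1e f1 ltxx.
by rewrite -fx pinv_f ?x0 ?(ltW x0) // lt_neqAle xn1 x1.
Qed.

Lemma pinv_le {s t} : 0 < s -> s <= t -> t < f 0 -> pinv t <= pinv s.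
Proof.
move=> s0 st tf0.
have [/andP[ps0 ps1] fps] : 0 < pinv s < 1 /\ f (pinv s) = s.
  by apply: pinv_spec; rewrite s0 (le_lt_trans st tf0).
have [/andP[pt0 pt1] fpt] : 0 < pinv t < 1 /\ f (pinv t) = t.
  by apply: pinv_spec; rewrite (lt_le_trans s0 st) tf0.
rewrite leNgt; apply/negP => /f_decr/(_ (ltW pt1)).
by rewrite fps fpt; move/(_ (ltW ps0)); lra.
Qed.

Lemma pinv_derive {t} : 0 < t < f 0 -> is_derive t 1 pinv (df (pinv t))^-1.
Proof.
move=> t0f; have [/andP[x0 x1] fx] := pinv_spec t0f.
rewrite -[in X in is_derive X]fx.
apply: (is_derive_inverse (f := f)).
- near=> y; apply: pinv_f; apply/andP; split; apply: ltW; near: y.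
  + exact: lt_nbhsr.
  + exact: lt_nbhsl.
- near=> y; apply: f_cvg; near: y; exact: lt_nbhsr.
- exact: f_derive.
- by rewrite lt_eqF // df_lt0 // x0 x1.
Unshelve. all: by end_near.
Qed.

Lemma dpinvNE {t} : 0 < t < f 0 -> dpinvN t = - (df (pinv t))^-1.
Proof. by move=> t0f; rewrite /dpinvN derive1E; case: (pinv_derive t0f) => _ ->. Qed.

Lemma dpinvN_gt {t} : f 0 < t -> dpinvN t = 0.
Proof.
move=> f0t; have : is_derive t 1 pinv 0.
  apply: (near_eq_is_derive _ (is_derive_cst (0 : R) t 1)).
  near=> s; rewrite /pinv ifF //; apply/negbTE; rewrite -leNgt; apply: ltW; near: s.
  exact: lt_nbhsr.
by rewrite /dpinvN derive1E => -[_ ->]; rewrite oppr0.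
Unshelve. all: by end_near.
Qed.

(* As t increases to f 0, pinv t decreases to 0, where df tends to -oo. *)
Lemma df_pinv_near_f0 {e} : 0 < e ->
  exists2 s, 0 <= s < f 0 & forall t, s < t < f 0 -> e^-1 <= - df (pinv t).
Proof.
move=> e0; have [eta /andP[eta0 eta1] df_eta] := df_near0 e^-1.
exists (f eta); first by rewrite f_ge0 ?f_lt_f0 ?(ltW eta0) ?(ltW eta1) ?eta0.
move=> t /andP[st tf0]; have t0 : 0 < t.
  by apply: le_lt_trans st; apply: f_ge0; rewrite !ltW.
have [/andP[x0 x1] fx] : 0 < pinv t < 1 /\ f (pinv t) = t.
  by apply: pinv_spec; rewrite t0 tf0.
apply: df_eta; rewrite x0 leNgt /=; apply/negP => /f_decr_pos.
by move=> /(_ eta0 (ltW x1)); rewrite fx; lra.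
Qed.

(* The tangent inequality at pinv t reads pinv t * - df (pinv t) <= f 0 - t,
   so the left difference quotient of pinv at f 0 is at most 1 / - df (pinv t). *)
Lemma dpinvN_f0 : dpinvN (f 0) = 0.
Proof.
rewrite /dpinvN /derive1.
suff -> : lim ((fun h => h^-1 *: (pinv (h + f 0) - pinv (f 0))) @ 0^') = 0.
  by rewrite oppr0.
apply: cvg_lim => //; apply/cvgrPdist_le => e e0.
have [s /andP[s0 sf0] df_s] := df_pinv_near_f0 e0.
have pinv_f0 : pinv (f 0) = 0 by rewrite /pinv ltxx.
near=> h; rewrite pinv_f0 subr0 sub0r normrN.
have [h0|h0] := leP 0 h.
  rewrite /pinv ifF ?scaler0 ?normr0 ?(ltW e0) //.
  by apply/negbTE; rewrite -leNgt lerDr.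
have hs : s < h + f 0.
  suff : `|h| < f 0 - s by rewrite ltr0_norm //; lra.
  by near: h; apply: dnbhs0_lt; rewrite subr_gt0.
have t0f : 0 < h + f 0 < f 0 by apply/andP; split; lra.
have [/andP[x0 x1] fx] := pinv_spec t0f.
have := df_s (h + f 0) (ltac:(by rewrite hs /=; lra)).
set x := pinv (h + f 0) in x0 x1 fx *.
have := f0_tangent x (ltac:(by rewrite x0 x1)); rewrite fx.
rewrite normrM normrV ?unitfE ?lt_eqF // ltr0_norm // gtr0_norm // => tangent dfe.
rewrite mulrC ler_pdivrMr ?oppr_gt0 //.
have xe : x / e <= x * - df x by rewrite ler_wpM2l // ltW.
have : x / e <= - h by lra.
by rewrite ler_pdivrMr // mulrC.
Unshelve. all: by end_near.
Qed.

Lemma dpinvN_ge_f0 {t} : f 0 <= t -> dpinvN t = 0.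
Proof. by rewrite le_eqVlt => /predU1P[<-|]; [exact: dpinvN_f0 | exact: dpinvN_gt]. Qed.

Lemma dpinvN_ge0 {t} : 0 < t -> 0 <= dpinvN t.
Proof.
move=> t0; have [tf0|f0t] := ltP t (f 0); last by rewrite dpinvN_ge_f0.
have t0f : 0 < t < f 0 by rewrite t0 tf0.
have [pt01 _] := pinv_spec t0f.
by rewrite dpinvNE // -invrN invr_ge0 oppr_ge0 ltW // df_lt0.
Qed.

Lemma dpinvN_nonincreasing : nonincreasing_pos dpinvN.
Proof.
move=> s t s0 st; have [tf0|f0t] := ltP t (f 0); last first.
  by rewrite dpinvN_ge_f0 // dpinvN_ge0.
have s0f : 0 < s < f 0 by rewrite s0 (le_lt_trans st tf0).
have t0f : 0 < t < f 0 by rewrite (lt_le_trans s0 st) tf0.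
have [/andP[ps0 ps1] _] := pinv_spec s0f.
have [/andP[pt0 pt1] _] := pinv_spec t0f.
have dfps := df_lt0 (pinv s) (ltac:(by rewrite ps0 ps1)).
rewrite !dpinvNE // -!invrN lef_pV2 ?posrE ?oppr_gt0 ?lerN2 //.
  by apply: df_le => //; exact: pinv_le.
by apply: le_lt_trans dfps; apply: df_le => //; exact: pinv_le.
Qed.

Section convexity.
Variable d2f : R -> R.
Hypothesis df_derive : forall x, 0 < x -> is_derive x 1 df (d2f x).
Hypothesis d2f_df3_le : forall x y, 0 < x -> x <= y -> y < 1 ->
  d2f y / df y ^+ 3 <= d2f x / df x ^+ 3.

Lemma dpinvN_derive {t} : 0 < t < f 0 ->
  is_derive t 1 dpinvN (d2f (pinv t) / df (pinv t) ^+ 3).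
Proof.
move=> t0f; have [/andP[x0 x1] _] := pinv_spec t0f.
have df_pinv := is_derive1_comp (df_derive _ x0) (pinv_derive t0f).
have dfx_neq0 : (df \o pinv) t != 0 by rewrite /= lt_eqF // df_lt0 // x0 x1.
apply: (near_eq_is_derive _ (is_derive_eq (is_deriveN (is_deriveV dfx_neq0 df_pinv)) _)).
  case/andP: t0f => t0 tf0.
  near=> s; rewrite dpinvNE //=; apply/andP; split; near: s.
  + exact: lt_nbhsr.
  + exact: lt_nbhsl.
rewrite /=; set d := df (pinv t); set d2 := d2f (pinv t).
change (- (- (d ^+ 2)^-1 * (d2 * d^-1)) = d2 / d ^+ 3).
by field.
Unshelve. all: by end_near.
Qed.

Lemma dpinvN_cvg {t} : 0 < t < f 0 -> dpinvN x @[x --> t] --> dpinvN t.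
Proof.
move=> t0f; apply: differentiable_continuous; apply/derivable1_diffP.
by case: (dpinvN_derive t0f).
Qed.

Lemma dpinvN_cvg_f0 : dpinvN t @[t --> (f 0)^'-] --> dpinvN (f 0).
Proof.
rewrite dpinvN_f0; apply/cvgrPdist_le => e e0.
have [s /andP[s0 sf0] df_s] := df_pinv_near_f0 e0.
near=> t.
have tf0 : t < f 0 by near: t; exact: nbhs_left_lt.
have st : s < t by near: t; exact: nbhs_left_gt.
have t0f : 0 < t < f 0 by rewrite tf0 (le_lt_trans s0 st).
have dfe := df_s t (ltac:(by rewrite st tf0)).
have einv0 : 0 < e^-1 by rewrite invr_gt0.
rewrite sub0r normrN dpinvNE // -invrN ger0_norm; last first.
  by rewrite invr_ge0; exact: le_trans (ltW einv0) dfe.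
by rewrite -[e in _ <= e]invrK lef_pV2 ?posrE // (lt_le_trans einv0).
Unshelve. all: by end_near.
Qed.

Lemma dpinvN_chord_le_f0 {a b z} : 0 < a -> a < b -> b <= f 0 -> a <= z <= b ->
  (b - a) * dpinvN z <= (b - z) * dpinvN a + (z - a) * dpinvN b.
Proof.
move=> a0 ab bf0.
apply: (@chord_le_of_derive_homo R dpinvN (fun t => d2f (pinv t) / df (pinv t) ^+ 3) a b ab).
- move=> x /andP[ax xb]; apply: dpinvN_derive.
  by rewrite (lt_trans a0 ax) (lt_le_trans xb bf0).
- move=> x y ax xy yb.
  have x0 : 0 < x by exact: lt_trans ax.
  have yf0 : y < f 0 by exact: lt_le_trans bf0.
  have [/andP[px0 px1] _] := pinv_spec (ltac:(by rewrite x0 (le_lt_trans xy yf0)) : 0 < x < f 0).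
  have [/andP[py0 py1] _] := pinv_spec (ltac:(by rewrite (lt_le_trans x0 xy) yf0) : 0 < y < f 0).
  by apply: d2f_df3_le => //; exact: pinv_le.
- by apply: cvg_at_right_filter; apply: dpinvN_cvg; rewrite a0 (lt_le_trans ab bf0).
- move: bf0; rewrite le_eqVlt => /predU1P[->|bf0]; first exact: dpinvN_cvg_f0.
  by apply: cvg_at_left_filter; apply: dpinvN_cvg; rewrite (lt_trans a0 ab) bf0.
Qed.

(* Beyond f 0 the function vanishes, and the chord over [a, f 0] lies below
   the chord over [a, b] because (z - a) (f 0 - b) <= 0. *)
Lemma dpinvN_chord a b z : 0 < a -> a <= z <= b ->
  (b - a) * dpinvN z <= (b - z) * dpinvN a + (z - a) * dpinvN b.
Proof.
move=> a0 /andP[az zb].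
have Fa := dpinvN_ge0 a0; have Fz := dpinvN_ge0 (lt_le_trans a0 az).
have [->|azn] := eqVneq a z; first lra.
have az' : a < z by rewrite lt_neqAle azn.
have [bf0|f0b] := leP b (f 0).
  by apply: dpinvN_chord_le_f0 => //; [exact: lt_le_trans zb | rewrite az].
rewrite (dpinvN_gt f0b) mulr0 addr0.
have [zf0|f0z] := ltP z (f 0); last by rewrite dpinvN_ge_f0 // mulr0 mulr_ge0 // subr_ge0.
have := @dpinvN_chord_le_f0 a (f 0) z a0 (lt_trans az' zf0) (lexx _).
move/(_ (ltac:(by rewrite az (ltW zf0)))).
rewrite dpinvN_f0 mulr0 addr0 => chord.
have af0 : 0 < f 0 - a by rewrite subr_gt0 (lt_trans az' zf0).
have key : (b - a) * (f 0 - z) <= (b - z) * (f 0 - a).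
  have : 0 <= (z - a) * (b - f 0) by apply: mulr_ge0; lra.
  nra.
have h1 := ler_wpM2l (ltac:(lra) : 0 <= b - a) chord.
have h2 := ler_wpM2r Fa key.
rewrite -(ler_pM2l af0); lra.
Qed.

Lemma dpinvN_convex : convex_pos dpinvN.
Proof. exact: convex_pos_of_chord dpinvN_chord. Qed.

End convexity.

(* Convexity puts the graph of dpinvN over [f (1/2), f 0] below the chord
   ending at (f 0, 0); at t = f x this chord bound reads
   1 <= K * (f 0 - f x) * - df x for a constant K. *)
Lemma dpinvN_not_convex :
  (f 0 - f x) * - df x @[x --> 0^'+] --> 0 -> ~ convex_pos dpinvN.
Proof.
move=> prod_cvg0 cvx.
have half0 : 0 < (2^-1 : R) by rewrite invr_gt0 ltr0n.
have half1 : (2^-1 : R) < 1 by rewrite invf_lt1 ?ltr0n // ltr1n.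
set s := f 2^-1; have sf0 : s < f 0 by apply: f_lt_f0; rewrite half0 half1.
have s0 : 0 < s by rewrite -f1; exact: f_decr_pos half0 half1 (lexx 1).
have fs0 : 0 < f 0 - s by rewrite subr_gt0.
set K := dpinvN s / (f 0 - s).
have K_prod_cvg0 : K * ((f 0 - f x) * - df x) @[x --> 0^'+] --> 0.
  by rewrite -[X in _ --> X](mulr0 K); apply: cvgM; [exact: cvg_cst | exact: prod_cvg0].
have [x /andP[x0 x1] /(_ x)[|xhalf K_prod_lt1]] : exists2 x, 0 < x < 1 &
    forall y, 0 < y <= x -> y < 2^-1 /\ K * ((f 0 - f y) * - df y) < 1.
- apply: near_right0_small; near=> y; split; near: y.
    exact: nbhs_right_lt.
  exact: cvgr_lt 0 K_prod_cvg0 _ ltr01.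
- by rewrite x0 lexx.
have sfx : s < f x by apply: f_decr_pos => //; exact: ltW.
have fxf0 : f x < f 0 by apply: f_lt_f0; rewrite x0 x1.
have dfx := df_lt0 x (ltac:(by rewrite x0 x1)).
set a := (f 0 - f x) / (f 0 - s).
have a01 : 0 <= a <= 1.
  rewrite /a; apply/andP; split; first by rewrite divr_ge0 // subr_ge0 ltW.
  by rewrite ler_pdivrMr // mul1r; lra.
have := cvx s (f 0) a s0 f0_gt0 a01.
have -> : a * s + (1 - a) * f 0 = f x by rewrite /a; field; rewrite gt_eqF.
rewrite dpinvN_f0 mulr0 addr0 dpinvNE ?pinv_f ?(ltW x0) ?(ltW x1) ?fxf0 ?(lt_trans s0 sfx) //.
have -> : a * dpinvN s = K * (f 0 - f x) by rewrite /a /K; ring.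
rewrite -(ler_pM2r (ltac:(by rewrite oppr_gt0) : 0 < - df x)) mulNr mulrN opprK mulVf ?lt_eqF //.
by rewrite -mulrA; lra.
Unshelve. all: by end_near.
Qed.

End pseudoinverse.

Section phi_neg.
Context {R : realType} {lam : R}.
Hypothesis lam_gtN1 : -1 < lam.
Hypothesis lam_lt0 : lam < 0.
Implicit Types x y : R.

Let lam_neq0 : lam != 0. Proof. by rewrite lt_eqF. Qed.
Let lam1_gt0 : 0 < lam + 1. Proof. by rewrite -ltrBlDr sub0r. Qed.
Let lam1_neq0 : lam + 1 != 0. Proof. by rewrite gt_eqF. Qed.

Definition dphi x := (x `^ lam - 1) / lam.

Definition d2phi x := x `^ (lam - 1).

Lemma phiE : phi lam = fun x => (lam * (lam + 1))^-1 * (x `^ (lam + 1) - x + lam * (1 - x)).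
Proof. by apply/funext => x; rewrite /phi (negbTE lam_neq0). Qed.

Lemma phi_at0 : phi lam 0 = (lam + 1)^-1.
Proof. by rewrite phiE /= powR0 //; field; rewrite lam_neq0 lam1_neq0. Qed.

Lemma phi_at1 : phi lam 1 = 0.
Proof. by rewrite phiE powR1 /=; ring. Qed.

Lemma phi_at0_subE x : 0 <= x ->
  phi lam 0 - phi lam x = x * - dphi x + x * x `^ lam / (lam + 1).
Proof.
move=> x0; rewrite phi_at0 phiE /dphi /= -(mulr_powRB1 x0 lam1_gt0) addrK.
by field; rewrite lam_neq0 lam1_neq0.
Qed.

Lemma phi_derive x : 0 < x -> is_derive x 1 (phi lam) (dphi x).
Proof.
move=> x0; rewrite phiE; have powR_derive := is_derive1_powR (lam + 1) x0.
apply: is_derive_eq.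
by rewrite !scaler_mulE addrK /dphi; field; rewrite lam_neq0 lam1_neq0.
Qed.

Lemma dphi_lt0 x : 0 < x < 1 -> dphi x < 0.
Proof. by move=> x01; rewrite /dphi pmulr_rlt0 ?subr_gt0 ?powR_gt1 // invr_lt0. Qed.

Lemma dphi_le x y : 0 < x -> x <= y -> y < 1 -> dphi x <= dphi y.
Proof.
move=> x0 xy y1; rewrite /dphi ler_wnM2r ?invr_le0 ?(ltW lam_lt0) // lerD2r.
rewrite /powR !gt_eqF ?(lt_le_trans x0 xy) //= ler_expR ler_wnM2l ?(ltW lam_lt0) //.
by rewrite ler_ln // posrE (lt_le_trans x0 xy).
Qed.

Lemma phi_tangent0 x : 0 < x < 1 -> x * - dphi x <= phi lam 0 - phi lam x.
Proof.
move=> /andP[x0 x1]; rewrite phi_at0_subE ?(ltW x0) // lerDl.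
by rewrite divr_ge0 ?mulr_ge0 ?powR_ge0 ?ltW.
Qed.

Lemma dphi_cvgNy : dphi x @[x --> 0^'+] --> -oo.
Proof.
apply/cvgrNyPle => A; move/cvgryPge: (powR_cvgy0 lam_lt0) => /(_ (A * lam + 1)).
by apply: filterS => x; rewrite /dphi ler_ndivrMr // lerBrDr.
Qed.

Lemma phi_cvg0 : phi lam x @[x --> 0^'+] --> phi lam 0.
Proof.
rewrite phiE powR0 //.
apply: cvgM; first exact: cvg_cst.
apply: cvgD; first apply: cvgB.
- exact: powR_cvg0.
- exact: cvg_at_right_filter cvg_id.
- apply: cvgM; first exact: cvg_cst.
  by apply: cvgB; [exact: cvg_cst | exact: cvg_at_right_filter cvg_id].
Qed.

Lemma dphi_derive x : 0 < x -> is_derive x 1 dphi (d2phi x).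
Proof.
move=> x0; have powR_derive := is_derive1_powR lam x0.
by apply: is_derive_eq; rewrite !scaler_mulE /d2phi; field.
Qed.

(* With u = x ^ (- lam) in (0, 1), the threshold lam = -1/2 is where the
   factor x ^ (- (2 lam + 1)) stops being nondecreasing. *)
Lemma d2phi_dphi3E x : 0 < x < 1 ->
  d2phi x / dphi x ^+ 3 = lam ^+ 3 * (x `^ (- (2 * lam + 1)) / (1 - x `^ (- lam)) ^+ 3).
Proof.
move=> /[dup] x01 /andP[x0 x1].
have u1 : x `^ (- lam) < 1 by rewrite powR_lt1 // oppr_gt0.
have u0 : 0 < x `^ (- lam) by rewrite powR_gt0.
have xlamE : x `^ lam = (x `^ (- lam))^-1 by rewrite -powRN opprK.
have -> : d2phi x = x `^ (- (2 * lam + 1)) * (x `^ lam) ^+ 3.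
  rewrite /d2phi -powR_mulrn ?powR_ge0 // -powRrM -powRD; last by apply/implyP => _; rewrite gt_eqF.
  by congr (x `^ _); ring.
rewrite /dphi xlamE; set u := x `^ (- lam).
by field; rewrite lam_neq0 subr_eq0 eq_sym lt_eqF // gt_eqF.
Qed.

Lemma d2phi_dphi3_le : lam <= - 2^-1 -> forall x y, 0 < x -> x <= y -> y < 1 ->
  d2phi y / dphi y ^+ 3 <= d2phi x / dphi x ^+ 3.
Proof.
move=> lam_le x y x0 xy y1; have y0 := lt_le_trans x0 xy; have x1 := le_lt_trans xy y1.
have lam3 : lam ^+ 3 < 0 by rewrite !exprS expr0 mulr1; nra.
rewrite !d2phi_dphi3E ?x0 ?x1 ?y0 ?y1 // ler_nM2l //.
have ex0 : 0 <= - (2 * lam + 1) by lra.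
have ux1 : x `^ (- lam) < 1 by rewrite powR_lt1 ?x0 ?x1 // oppr_gt0.
have uy1 : y `^ (- lam) < 1 by rewrite powR_lt1 ?y0 ?y1 // oppr_gt0.
have uxy : x `^ (- lam) <= y `^ (- lam).
  by apply: ge0_ler_powR; rewrite ?nnegrE ?oppr_ge0 ?(ltW lam_lt0) ?(ltW x0) ?(ltW y0).
apply: ler_pM; rewrite ?powR_ge0 ?invr_ge0 ?exprn_ge0 ?subr_ge0 ?(ltW ux1) //.
  by apply: ge0_ler_powR; rewrite ?nnegrE ?(ltW x0) ?(ltW y0).
rewrite lef_pV2 ?posrE ?exprn_gt0 ?subr_gt0 //.
apply: lerXn2r; rewrite ?nnegrE ?subr_ge0 ?(ltW ux1) ?(ltW uy1) //.
exact: lerB (lexx 1) uxy.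
Qed.

(* The product is at most a constant times x ^ (2 lam + 1). *)
Lemma phi_at0_sub_dphiN_cvg0 : - 2^-1 < lam ->
  (phi lam 0 - phi lam x) * - dphi x @[x --> 0^'+] --> 0.
Proof.
move=> lam_gt; set a := (- lam)^-1; set b := (lam + 1)^-1.
have a0 : 0 < a by rewrite invr_gt0 oppr_gt0.
have b0 : 0 < b by rewrite invr_gt0.
apply: (@squeeze_cvgr _ _ _ _ (fun=> 0) (fun x : R => (a + b) * a * x `^ (2 * lam + 1))).
- near=> x; have x0 : 0 < x by near: x; exact: nbhs_right_gt.
  have x1 : x < 1 by near: x; exact: nbhs_right_lt.
  have E1 : 1 < x `^ lam by rewrite powR_gt1 ?x0 ?x1.
  have -> : x `^ (2 * lam + 1) = x * x `^ lam ^+ 2.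
    rewrite powRD; last by apply/implyP => _; rewrite gt_eqF.
    by rewrite powRr1 ?(ltW x0) // mulrC [2 * lam]mulrC powRrM powR_mulrn ?powR_ge0.
  have dphiN : - dphi x = (x `^ lam - 1) * a by rewrite /dphi -mulrN -invrN.
  rewrite phi_at0_subE ?(ltW x0) // dphiN -/b; set E := x `^ lam in E1 *.
  have Ea : 0 <= (E - 1) * a by rewrite mulr_ge0 ?subr_ge0 ?(ltW E1) ?(ltW a0).
  have xE : 0 <= x * E by rewrite mulr_ge0 ?(ltW x0) // (le_trans ler01 (ltW E1)).
  have lhs0 : 0 <= x * ((E - 1) * a) + x * E * b.
    by apply: addr_ge0; apply: mulr_ge0 => //; exact: ltW.
  apply/andP; split; first exact: mulr_ge0.
  apply: (@le_trans _ _ ((x * E * (a + b)) * (E * a))); last first.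
    by rewrite le_eqVlt; apply/orP; left; apply/eqP; ring.
  apply: ler_pM => //.
    rewrite mulrDr lerD2r mulrA ler_wpM2r ?(ltW a0) // ler_wpM2l ?(ltW x0) //; lra.
  by rewrite ler_wpM2r ?(ltW a0) //; lra.
- exact: cvg_cst.
- by apply: scale_powR_cvg0; lra.
Unshelve. all: by end_near.
Qed.

Lemma dpinvN_phi_nonincreasing : nonincreasing_pos (dpinvN (phi lam)).
Proof.
exact: dpinvN_nonincreasing phi_at1 phi_derive dphi_lt0 dphi_le phi_tangent0
  dphi_cvgNy phi_cvg0.
Qed.

Lemma dpinvN_phi_convex : lam <= - 2^-1 -> convex_pos (dpinvN (phi lam)).
Proof.
move=> lam_le; exact: dpinvN_convex phi_at1 phi_derive dphi_lt0 phi_tangent0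
  dphi_cvgNy phi_cvg0 _ dphi_derive (d2phi_dphi3_le lam_le).
Qed.

Lemma dpinvN_phi_not_convex : - 2^-1 < lam -> ~ convex_pos (dpinvN (phi lam)).
Proof.
move=> lam_gt; exact: dpinvN_not_convex phi_at1 phi_derive dphi_lt0 phi_tangent0
  dphi_cvgNy phi_cvg0 (phi_at0_sub_dphiN_cvg0 lam_gt).
Qed.

End phi_neg.

Section phi_zero.
Context {R : realType}.
Implicit Types x y : R.

Lemma phi0E : phi 0 = fun x : R => 1 - x + x * ln x.
Proof. by apply/funext => x; rewrite /phi eqxx. Qed.

Lemma phi0_at0 : phi 0 0 = 1 :> R.
Proof. by rewrite phi0E /= mul0r subr0 addr0. Qed.

Lemma phi0_at1 : phi 0 1 = 0 :> R.
Proof. by rewrite phi0E /= ln1 mulr0 addr0 subrr. Qed.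

Lemma phi0_derive x : 0 < x -> is_derive x 1 (phi 0) (ln x).
Proof.
move=> x0; rewrite phi0E; have ln_derive := is_derive1_ln x0.
by apply: is_derive_eq; rewrite !scaler_mulE; field; rewrite gt_eqF.
Qed.

Lemma ln_le {x y} : 0 < x -> x <= y -> ln x <= ln y.
Proof. by move=> x0 xy; rewrite ler_ln // posrE (lt_le_trans x0 xy). Qed.

Lemma phi0_tangent0 x : 0 < x < 1 -> x * - ln x <= phi 0 0 - phi 0 x.
Proof. by move=> /andP[x0 _]; rewrite phi0_at0 phi0E /=; lra. Qed.

Lemma phi0_cvg0 : phi 0 x @[x --> 0^'+] --> phi 0 (0 : R).
Proof.
rewrite phi0_at0 phi0E.
rewrite -[X in _ --> X]addr0 -[X in _ --> X + _]subr0.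
apply: cvgD; last exact: x_ln_cvg0.
by apply: cvgB; [exact: cvg_cst | exact: cvg_at_right_filter cvg_id].
Qed.

Lemma phi0_at0_sub_lnN_cvg0 : (phi 0 0 - phi 0 x) * - ln x @[x --> 0^'+] --> (0 : R).
Proof.
rewrite (_ : (fun x => _) = fun x => - (x * ln x) + x * ln x ^+ 2); last first.
  by apply/funext => x; rewrite phi0_at0 phi0E /=; ring.
rewrite -[X in _ --> X]addr0 -[X in _ --> X + _]oppr0.
by apply: cvgD; [apply: cvgN; exact: x_ln_cvg0 | exact: x_ln2_cvg0].
Qed.

Lemma dpinvN_phi0_nonincreasing : nonincreasing_pos (dpinvN (@phi R 0)).
Proof.
have ln_le01 x y : 0 < x -> x <= y -> y < 1 -> ln x <= ln y.
  by move=> x0 xy _; exact: ln_le.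
exact: dpinvN_nonincreasing phi0_at1 phi0_derive (@ln_lt0 R) ln_le01
  phi0_tangent0 (@lnNy R) phi0_cvg0.
Qed.

Lemma dpinvN_phi0_not_convex : ~ convex_pos (dpinvN (@phi R 0)).
Proof.
exact: dpinvN_not_convex phi0_at1 phi0_derive (@ln_lt0 R) phi0_tangent0 (@lnNy R)
  phi0_cvg0 phi0_at0_sub_lnN_cvg0.
Qed.

End phi_zero.

Theorem lemma3 (R : realType) (lam : R) (hlam : -1 < lam <= 0) :
  let f := fun t : R => - derive1 (phi_pinv lam) t in
  nonincreasing_pos f /\
  (lam <= - (2%:R)^-1 -> convex_pos f) /\
  (- (2%:R)^-1 < lam -> ~ convex_pos f).
Proof.
move=> f; have -> : f = dpinvN (phi lam) by [].
case/andP: hlam => lam_gtN1 lam_le0; have [->|lam_neq0] := eqVneq lam 0.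
  split; first exact: dpinvN_phi0_nonincreasing.
  by split=> [|_]; [move=> ?; lra | exact: dpinvN_phi0_not_convex].
have lam_lt0 : lam < 0 by rewrite lt_neqAle lam_neq0.
split; first exact: dpinvN_phi_nonincreasing lam_gtN1 lam_lt0.
split; first exact: dpinvN_phi_convex lam_gtN1 lam_lt0.
exact: dpinvN_phi_not_convex lam_gtN1 lam_lt0.
Qed.
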